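(* Let $d \geq 2$ and let $X$ be a $d$-dimensional simplicial complex on $n$ vertices with $\Delta(X) \leq K - 1$ for some integer $K \geq 5$. Then there exists a proper coloring $c$ of $V(X)$ using at most $18K^8 d^6 \lceil n^{1/d} \rceil$ colors such that no two $(d-1)$-dimensional faces of $X$ receive the same pattern under $c$.
   Context: For a finite simplicial complex $X$, $\mathrm{skel}_k(X)$ is the set of $k$-dimensional faces, $\Delta_{i,j}(X) = \max_{\sigma \in \mathrm{skel}_i(X)} |\{\tau \in \mathrm{skel}_j(X) : \sigma \subseteq \tau\}|$, and $\Delta(X) = \max_{i,j}\Delta_{i,j}(X)$. A coloring of $V(X)$ is proper if no two vertices joined by an edge receive the same color. The pattern of a face under a coloring is the multiset of colors of its vertices. *)

From mathcomp Require Import all_boot.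
Set Implicit Arguments. Unset Strict Implicit. Unset Printing Implicit Defensive.

(* A finite (abstract) simplicial complex on vertex type T: a family of
   nonempty finite vertex sets, closed under taking nonempty subsets.
   A face s has dimension #|s| - 1. *)
Definition simplicial_complex (T : finType) (X : {set {set T}}) : Prop :=
  set0 \notin X /\
  (forall s t : {set T}, t \in X -> s \subset t -> s != set0 -> s \in X).

Definition vertex_set_is_all (T : finType) (X : {set {set T}}) : Prop :=
  forall x : T, [set x] \in X.

Definition complex_dim (T : finType) (X : {set {set T}}) (d : nat) : Prop :=
  (exists2 s, s \in X & #|s| = d.+1) /\ (forall s, s \in X -> #|s| <= d.+1).

Definition skel (T : finType) (X : {set {set T}}) (k : nat) : {set {set T}} :=
  [set s in X | #|s| == k.+1].

Definition Delta_ij (T : finType) (X : {set {set T}}) (i j : nat) : nat :=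
  \max_(s in skel X i) #|[set t in skel X j | s \subset t]|.

(* Delta(X) = max_{i,j} Delta_{i,j}(X); faces have dimension <= #|T|,
   so the max over i, j < #|T|.+1 is the max over all i, j. *)
Definition Delta (T : finType) (X : {set {set T}}) : nat :=
  \max_(i < #|T|.+1) \max_(j < #|T|.+1) Delta_ij X i j.

Definition proper_coloring (T : finType) (X : {set {set T}}) (C : Type)
    (c : T -> C) : Prop :=
  forall x y : T, x != y -> [set x; y] \in X -> c x <> c y.

(* pattern of a face: multiset of colors of its vertices, represented by
   the color sequence up to permutation *)
Definition same_pattern (T : finType) (C : eqType) (c : T -> C)
    (s t : {set T}) : bool :=
  perm_eq [seq c x | x in s] [seq c x | x in t].

(* ceil_root d n = ceil (n^(1/d)) = least m with n <= m ^ d (for d >= 1) *)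
Definition ceil_root (d n : nat) : nat :=
  find (fun m => n <= m ^ d) (iota 0 n.+1).

From mathcomp Require Import all_boot zify.
Set Implicit Arguments. Unset Strict Implicit. Unset Printing Implicit Defensive.

(* Colour the vertices first with [K ^ 2] colours [a] so that vertices at
   distance at most 2 in the 1-skeleton differ; this is possible greedily, and
   makes every ridge ((d-1)-face) rainbow, so patterns of ridges are sets.
   The second colour [b], with [2K * P] values where [P = 2Km] and [m ^ d >= n],
   is fixed vertex by vertex in increasing order of [a], keeping the invariant
   that for every set [Q] of [j] colours and every level [beta], at most
   [P ^ (d - j)] ridges whose vertices below level [beta] are all coloured show
   exactly the colours [Q] there. Summing over the candidate colours of the
   current vertex [v], at most [2P] of them break the invariant at a given
   ridge through [v], and fewer than [K] ridges contain [v], so a safe colour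
   exists. For [j = d] the bound is 1, which is distinctness of patterns;
   the case [j = d - 1] is where the distance-2 property of [a] is needed again. *)

Lemma leq_card_bigcup (I T : finType) (P : pred I) (S : I -> {set T}) :
  #|\bigcup_(i | P i) S i| <= \sum_(i | P i) #|S i|.
Proof.
elim/big_rec2: _ => [|i U s _ IH]; first by rewrite cards0.
by rewrite cardsU (leq_trans (leq_subr _ _)) // leq_add2l.
Qed.

Lemma exists_notin (T : finType) (A : {set T}) : #|A| < #|T| -> exists x, x \notin A.
Proof.
rewrite -(cardsC A) -addn1 leq_add2l card_gt0 => /set0Pn[x].
by rewrite inE; exists x.
Qed.

Lemma leq_card_mul_sum (I : finType) (A : {pred I}) (f : I -> nat) c :
  (forall x, x \in A -> c <= f x) -> #|A| * c <= \sum_x f x.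
Proof.
move=> Af; rewrite -sum_nat_const (@leq_trans (\sum_(x in A) f x)) ?leq_sum //.
by rewrite [leqRHS](bigID (mem A)) leq_addr.
Qed.

Lemma leq_sum_card_disjoint (I U : finType) (A : {set U}) (S : I -> {set U}) :
  (forall i, S i \subset A) -> (forall i j u, u \in S i -> u \in S j -> i = j) ->
  \sum_i #|S i| <= #|A|.
Proof.
move=> SA Sdisj.
have card_sum (V : finType) (B : {set V}) : #|B| = \sum_u (u \in B : nat).
  by rewrite -sum1_card big_mkcond; apply: eq_bigr => u _; case: (u \in B).
rewrite (eq_bigr (fun i => \sum_u (u \in S i : nat))) => [|i _]; last exact: card_sum.
rewrite exchange_big card_sum; apply: leq_sum => u _ /=.
case: (boolP (u \in A)) => uA; last first.
  rewrite big1 // => i _; case: (boolP (u \in S i)) => // /(subsetP (SA i)) uA'.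
  by rewrite uA' in uA.
rewrite (eq_bigr (fun i => (i \in [set i | u \in S i]) : nat)) => [|i _]; last by rewrite inE.
rewrite -card_sum; apply/card_le1P => i; rewrite inE => ui j; rewrite inE.
by apply/idP/eqP => [uj|->//]; apply: Sdisj uj ui.
Qed.

Lemma greedy_coloring (T : finType) (A : nat) (R : rel T) :
  0 < A -> symmetric R -> irreflexive R -> (forall v, #|[set w | R v w]| < A) ->
  exists a : T -> 'I_A, forall v w, R v w -> a v != a w.
Proof.
move=> A_gt0 Rsym Rirr Rdeg.
suff [a aP] : exists a : T -> 'I_A, {in enum T &, forall v w, R v w -> a v != a w}.
  by exists a => v w; apply: aP; rewrite mem_enum.
elim: (enum T) => [|v s [a aP]]; first by exists (fun=> Ordinal A_gt0).
have [x x_free] : exists x, x \notin a @: [set w | R v w].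
  by apply: exists_notin; rewrite card_ord (leq_ltn_trans (leq_imset_card _ _)).
exists (fun w => if w == v then x else a w) => v' w' v's w's Rvw.
case: (eqVneq v' v) => [ev|nv]; case: (eqVneq w' v) => [ew|nw].
- by rewrite ev ew Rirr in Rvw.
- by apply: contraNneq x_free => ->; apply: imset_f; rewrite inE -ev.
- by apply: contraNneq x_free => <-; apply: imset_f; rewrite inE Rsym -ew.
- by apply: aP => //; [move: v's | move: w's]; rewrite inE ?(negbTE nv) ?(negbTE nw).
Qed.

Lemma imset_filter (T C : finType) (f : T -> C) (g : T -> nat) (h : C -> nat) (A : {set T}) b :
  (forall w, h (f w) = g w) -> f @: [set w in A | g w < b] = [set p in f @: A | h p < b].
Proof.
move=> hf; apply/setP => p; rewrite inE; apply/imsetP/andP.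
  by case=> w; rewrite inE => /andP[wA lt] ->; rewrite hf imset_f.
by case=> /imsetP[w wA ->]; rewrite hf => lt; exists w; rewrite // inE wA.
Qed.

Section Graph.
Variables (T : finType) (X : {set {set T}}).

Definition adjacent v w := (v != w) && ([set v; w] \in X).

Definition adjacent2 v w :=
  (v != w) && (adjacent v w || [exists u, adjacent v u && adjacent u w]).

Lemma adjacent_sym : symmetric adjacent.
Proof. by move=> v w; rewrite /adjacent eq_sym setUC. Qed.

Lemma adjacent2_sym : symmetric adjacent2.
Proof.
move=> v w; rewrite /adjacent2 eq_sym adjacent_sym; congr (_ && (_ || _)).
by apply/existsP/existsP => -[u /andP[vu uw]]; exists u; rewrite adjacent_sym uw adjacent_sym vu.
Qed.

Lemma adjacent2_irr : irreflexive adjacent2.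
Proof. by move=> v; rewrite /adjacent2 eqxx. Qed.

Lemma card_adjacent2 D :
  (forall v, #|[set w | adjacent v w]| <= D) -> forall v, #|[set w | adjacent2 v w]| < D.+1 ^ 2.
Proof.
move=> degD v; set N := [set w | adjacent v w].
have sub : [set w | adjacent2 v w] \subset N :|: \bigcup_(u in N) [set w | adjacent u w].
  apply/subsetP => w; rewrite !inE => /andP[_ /orP[->//|/existsP[u /andP[vu uw]]]].
  by apply/orP; right; apply/bigcupP; exists u; rewrite ?inE.
rewrite (leq_ltn_trans (subset_leq_card sub)) // (leq_ltn_trans (leq_card_setU _ _)) //.
have N2 : #|\bigcup_(u in N) [set w | adjacent u w]| <= D * D.
  rewrite (leq_trans (leq_card_bigcup _ _)) // (leq_trans _ (leq_mul (degD v) (leqnn D))) //.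
  by rewrite -sum_nat_const leq_sum.
have := degD v; rewrite -/N; nia.
Qed.

Lemma face_adjacent t v w : simplicial_complex X ->
  t \in X -> v \in t -> w \in t -> v != w -> adjacent v w.
Proof.
move=> [_ downX] tX vt wt vw; rewrite /adjacent vw (downX _ t) //.
  by apply/subsetP => u; rewrite !inE => /orP[] /eqP ->.
by apply/set0Pn; exists v; rewrite !inE eqxx.
Qed.

Hypothesis X_spans : vertex_set_is_all X.

Lemma card_skel_through_le_Delta v j : #|[set t in skel X j | v \in t]| <= Delta X.
Proof.
have [jT|Tj] := ltnP j #|T|.+1; last first.
  suff -> : [set t in skel X j | v \in t] = set0 by rewrite cards0.
  apply/setP => t; rewrite !inE; apply/negP => /andP[/andP[_ /eqP tj] _].
  by have := max_card t; rewrite tj; lia.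
have v0 : [set v] \in skel X 0 by rewrite inE X_spans cards1.
apply: (leq_trans _ (leq_bigmax (Ordinal (ltn0Sn #|T|)))) => /=.
apply: (leq_trans _ (leq_bigmax (Ordinal jT))) => /=.
apply: (leq_trans _ (leq_bigmax_cond _ v0)) => /=.
by apply: subset_leq_card; apply/subsetP => t; rewrite !inE sub1set.
Qed.

Lemma card_adjacent_le_Delta v : #|[set w | adjacent v w]| <= Delta X.
Proof.
rewrite (leq_trans _ (card_skel_through_le_Delta v 1)) //.
rewrite -(@card_in_imset _ _ (fun w => [set v; w])) => [|w1 w2].
  apply: subset_leq_card; apply/subsetP => _ /imsetP[w + ->].
  by rewrite !inE => /andP[vw ->]; rewrite cards2 vw eqxx.
rewrite !inE => /andP[vw1 _] /andP[vw2 _] e.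
have : w1 \in [set v; w2] by rewrite -e set22.
by rewrite in_set2 => /orP[/eqP w1v|/eqP //]; rewrite w1v eqxx in vw1.
Qed.

End Graph.

Section Patterns.
Variables (T : finType) (C D : eqType) (c : T -> C) (f : C -> D).
Hypothesis f_inj : injective f.

Lemma proper_coloring_comp (X : {set {set T}}) :
  proper_coloring X c -> proper_coloring X (f \o c).
Proof. by move=> cX x y xy xyX /f_inj; apply: cX. Qed.

Lemma same_pattern_comp s t : same_pattern (f \o c) s t = same_pattern c s t.
Proof.
rewrite /same_pattern /image_mem !(map_comp f c).
by apply/idP/idP => [/perm_map_inj|/perm_map]; apply.
Qed.

End Patterns.

Lemma same_pattern_imset (T C : finType) (c : T -> C) s t :
  same_pattern c s t -> c @: s = c @: t.
Proof.
move=> /perm_mem st; apply/setP => p; apply/imsetP/imsetP => -[w ws ->].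
  have : c w \in [seq c x | x in t] by rewrite -st image_f.
  by case/imageP => w' ? ->; exists w'.
have : c w \in [seq c x | x in s] by rewrite st image_f.
by case/imageP => w' ? ->; exists w'.
Qed.

Lemma leq_ceil_root d n : 0 < d -> n <= ceil_root d n ^ d.
Proof.
move=> d_gt0; set p := fun m => n <= m ^ d.
have has_p : has p (iota 0 n.+1).
  apply/hasP; exists n; rewrite ?mem_iota //= /p.
  by case: (posnP n) => [->|n_gt0] //; rewrite -{1}(expn1 n) leq_pexp2l.
have p_lt := has_p; rewrite has_find size_iota in p_lt.
by have := nth_find 0 has_p; rewrite nth_iota.
Qed.

Lemma ceil_root_gt0 d n : 0 < d -> 0 < n -> 0 < ceil_root d n.
Proof.
move=> d_gt0 n_gt0; have := leq_ceil_root n d_gt0; rewrite lt0n.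
by apply: contraTneq => ->; rewrite exp0n // -ltnNge.
Qed.

Lemma card_colors_le d K m : 0 < d -> 0 < K ->
  #|{: 'I_(K ^ 2) * 'I_(2 * K * (2 * K * m))}| <= 18 * K ^ 8 * d ^ 6 * m.
Proof.
move=> d_gt0 K_gt0; rewrite card_prod !card_ord.
have K48 : K ^ 4 <= K ^ 8 by rewrite leq_pexp2l.
have d6 : 0 < d ^ 6 by rewrite expn_gt0 d_gt0.
have -> : K ^ 2 * (2 * K * (2 * K * m)) = 4 * K ^ 4 * m by rewrite !expnS expn0; lia.
rewrite leq_mul2r -(muln1 (4 * _)) leq_mul ?orbT //.
by rewrite leq_mul.
Qed.

Section RidgeColoring.
Variables (T : finType) (X : {set {set T}}) (d K m : nat).
Hypotheses (d_gt0 : 0 < d) (K_gt0 : 0 < K) (m_gt0 : 0 < m).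
Hypotheses (X_complex : simplicial_complex X) (card_T : #|T| <= m ^ d).

Local Notation F := (skel X d.-1).
Local Notation P := (2 * K * m).
Local Notation L := (2 * K * P).

Hypothesis ridge_degree : forall v, #|[set t in F | v \in t]| <= K - 1.
Hypothesis vertex_degree : forall v, #|[set w | adjacent X v w]| <= K - 1.

Lemma P_gt0 : 0 < P.
Proof. by rewrite !muln_gt0 K_gt0 m_gt0. Qed.

Lemma ridge_in_X t : t \in F -> t \in X.
Proof. by rewrite inE => /andP[]. Qed.

Lemma card_ridge t : t \in F -> #|t| = d.
Proof. by rewrite inE => /andP[_ /eqP ->]; rewrite prednK. Qed.

Lemma card_ridges : #|F| <= P ^ d.
Proof.
have cover : F \subset \bigcup_v [set t in F | v \in t].
  apply/subsetP => t tF; have : 0 < #|t| by rewrite card_ridge.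
  rewrite card_gt0 => /set0Pn[v vt]; apply/bigcupP; exists v => //.
  by rewrite inE tF.
rewrite (leq_trans (subset_leq_card cover)) // (leq_trans (leq_card_bigcup _ _)) //.
have sum_le : \sum_v #|[set t in F | v \in t]| <= #|T| * (K - 1).
  by rewrite -sum_nat_const leq_sum.
have K_le : K - 1 <= (2 * K) ^ d.
  apply: (@leq_trans (2 * K)); first lia.
  by rewrite -{1}(expn1 (2 * K)) leq_pexp2l ?muln_gt0.
by rewrite (leq_trans sum_le) // expnMn mulnC leq_mul.
Qed.

Section Distance2Coloring.
Variable a : T -> 'I_(K ^ 2).
Hypothesis a_adjacent2 : forall v w, adjacent2 X v w -> a v != a w.

Lemma a_inj_ridge t : t \in F -> {in t &, injective a}.
Proof.
move=> tF v w vt wt avw; apply/eqP; apply: contraT => vw.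
have := a_adjacent2 (v := v) (w := w); rewrite avw eqxx /adjacent2 vw.
by rewrite (face_adjacent X_complex (ridge_in_X tF)) //; apply.
Qed.

Lemma a_inj_link t1 t2 v w1 w2 : t1 \in F -> t2 \in F -> v \in t1 -> v \in t2 ->
  w1 \in t1 -> w2 \in t2 -> w1 != v -> w2 != v -> a w1 = a w2 -> w1 = w2.
Proof.
move=> t1F t2F vt1 vt2 wt1 wt2 w1v w2v aw; apply/eqP; apply: contraT => w12.
have := a_adjacent2 (v := w1) (w := w2); rewrite aw eqxx /adjacent2 w12; apply.
apply/orP; right; apply/existsP; exists v.
rewrite (face_adjacent X_complex (ridge_in_X t1F)) //= adjacent_sym.
exact: (face_adjacent X_complex (ridge_in_X t2F)).
Qed.

(* Vertices are processed in increasing order of [a], ties broken by [enum_rank]. *)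
Definition rank w := a w * #|T| + enum_rank w.

Lemma rank_inj : injective rank.
Proof.
move=> w1 w2 /(congr1 (modn^~ #|T|)); rewrite !modnMDl !modn_small ?ltn_ord //.
by move/val_inj/enum_rank_inj.
Qed.

Lemma rank_lt w v : a w < a v -> rank w < rank v.
Proof.
move=> avw; have : (a w).+1 * #|T| <= a v * #|T| by rewrite leq_mul2r avw orbT.
have : enum_rank w < #|T| := ltn_ord _.
by rewrite /rank mulSn; lia.
Qed.

Lemma rank_lt_max w : rank w < K ^ 2 * #|T|.
Proof.
have : (a w).+1 * #|T| <= K ^ 2 * #|T| by rewrite leq_mul2r ltn_ord orbT.
have : enum_rank w < #|T| := ltn_ord _.
by rewrite /rank mulSn; lia.
Qed.

Definition color (b : T -> 'I_L) w := (a w, b w).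
Definition low (t : {set T}) beta := [set w in t | a w < beta].
Definition processed k := [set w | rank w < k].
Definition load b k beta (Q : {set 'I_(K ^ 2) * 'I_L}) :=
  #|[set t in F | (low t beta \subset processed k) && (color b @: low t beta == Q)]|.
Definition balanced b k := forall beta Q, load b k beta Q <= P ^ (d - #|Q|).

Lemma color_inj_ridge b t : t \in F -> {in t &, injective (color b)}.
Proof. by move=> tF v w vt wt /(congr1 fst); apply: (a_inj_ridge tF vt wt). Qed.

Lemma low_subS t beta : low t beta \subset low t beta.+1.
Proof. by apply/subsetP => w; rewrite !inE => /andP[-> /ltnW]. Qed.

Lemma color_low_pred b t beta :
  color b @: low t beta = [set p in color b @: low t beta.+1 | p.1 < beta].
Proof.
have -> : low t beta = [set w in low t beta.+1 | a w < beta].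
  apply/setP => w; rewrite !inE -andbA; congr (_ && _).
  by apply/idP/andP => [lt | [] //]; split; first exact: ltnW.
exact: imset_filter.
Qed.

Lemma balanced0 b : balanced b 0.
Proof.
move=> beta Q; have [->|/set0Pn[p pQ]] := eqVneq Q set0.
  rewrite cards0 subn0 (leq_trans _ card_ridges) // subset_leq_card //.
  by apply/subsetP => t; rewrite inE => /andP[].
apply: (@leq_trans 0) => //; rewrite leqn0 cards_eq0; apply/eqP/setP => t.
rewrite !inE; apply/negP => /andP[_ /andP[low0 /eqP lowQ]].
by move: pQ; rewrite -lowQ => /imsetP[w /(subsetP low0)]; rewrite inE.
Qed.

Section Step.
Variables (b : T -> 'I_L) (k : nat) (v : T).
Hypotheses (b_bal : balanced b k) (rank_v : rank v = k).

Lemma processed_succ : processed k.+1 = v |: processed k.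
Proof.
apply/setP => w; rewrite !inE ltnS leq_eqVlt -rank_v.
by congr (_ || _); apply/eqP/eqP => [/rank_inj|->].
Qed.

Lemma processed_subS : processed k \subset processed k.+1.
Proof. by rewrite processed_succ subsetUr. Qed.

Lemma processed_of_lt w : a w < a v -> w \in processed k.
Proof. by move=> awv; rewrite inE -rank_v rank_lt. Qed.

Lemma processed_succ_le w : w \in processed k.+1 -> a w <= a v.
Proof.
rewrite inE ltnS -rank_v leqNgt => rank_wv; rewrite leqNgt.
by apply: contra rank_wv; apply: rank_lt.
Qed.

Definition extend (x : 'I_L) w := if w == v then x else b w.
Definition trace t := color b @: low t (a v).
Definition star_with (Q : {set 'I_(K ^ 2) * 'I_L}) :=
  [set t in F | (v \in t) && (trace t == Q)].
Definition load_at (Q : {set 'I_(K ^ 2) * 'I_L}) x := load b k (a v).+1 ((a v, x) |: Q).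

Lemma star_withP (Q : {set 'I_(K ^ 2) * 'I_L}) t :
  reflect [/\ t \in F, v \in t & trace t = Q] (t \in star_with Q).
Proof.
rewrite /star_with inE.
by apply: (iffP andP) => [[tF /andP[vt /eqP]]|[-> -> ->]]; rewrite ?eqxx.
Qed.

Lemma trace_lt t p : p \in trace t -> p.1 < a v.
Proof. by case/imsetP => w; rewrite inE => /andP[_ awv] ->. Qed.

Lemma notin_trace t x : (a v, x) \notin trace t.
Proof. by apply/negP => /trace_lt; rewrite ltnn. Qed.

Lemma color_extend_notin x (A : {set T}) : v \notin A -> color (extend x) @: A = color b @: A.
Proof.
move=> vA; apply: eq_in_imset => w wA; rewrite /color /extend.
by case: eqP => // wv; rewrite -wv wA in vA.
Qed.

Lemma v_notin_low t beta : beta <= a v -> v \notin low t beta.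
Proof. by move=> le_beta; rewrite inE negb_and -leqNgt le_beta orbT. Qed.

Lemma low_succ t : t \in F -> v \in t -> low t (a v).+1 = v |: low t (a v).
Proof.
move=> tF vt; apply/setP => w; rewrite !inE ltnS leq_eqVlt.
case: (eqVneq w v) => [->|wv]; first by rewrite vt eqxx.
case wt: (w \in t) => //=; case: (eqVneq (a w : nat) (a v)) => //= awv.
by move: wv; rewrite (a_inj_ridge tF wt vt (val_inj awv)) eqxx.
Qed.

Lemma color_extend_succ t x : t \in F -> v \in t ->
  color (extend x) @: low t (a v).+1 = (a v, x) |: trace t.
Proof.
move=> tF vt; rewrite low_succ // imsetU1 color_extend_notin ?v_notin_low //.
by rewrite /color /extend eqxx.
Qed.

Lemma low_subD1 t : low t (a v) \subset t :\ v.
Proof.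
apply/subsetP => w; rewrite !inE => /andP[-> awv]; rewrite andbT.
by apply: contraTneq awv => ->; rewrite ltnn.
Qed.

Lemma card_trace t : t \in F -> #|trace t| = #|low t (a v)|.
Proof.
move=> tF; apply: card_in_imset => w1 w2; rewrite !inE => /andP[w1t _] /andP[w2t _].
exact: (@color_inj_ridge b t tF).
Qed.

Lemma card_ridgeD1 t : t \in F -> v \in t -> #|t :\ v| = d.-1.
Proof. by move=> tF vt; have := cardsD1 v t; rewrite vt card_ridge // => ->. Qed.

Lemma card_trace_le t : t \in F -> v \in t -> #|trace t| <= d.-1.
Proof.
by move=> tF vt; rewrite card_trace // -(card_ridgeD1 tF vt) subset_leq_card ?low_subD1.
Qed.

Lemma card_star_with Q : #|star_with Q| <= K - 1.
Proof.
apply: leq_trans (ridge_degree v); apply: subset_leq_card.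
by apply/subsetP => t /star_withP[tF vt _]; rewrite inE tF.
Qed.

(* When the trace is all of [t :\ v], the distance-2 property of [a] pins [t] down. *)
Lemma card_star_with_full t : t \in F -> v \in t -> #|trace t| = d.-1 ->
  #|star_with (trace t)| <= 1.
Proof.
move=> tF vt full.
have low_full t' : t' \in star_with (trace t) -> low t' (a v) = t' :\ v.
  case/star_withP => t'F vt' tr; apply/eqP.
  by rewrite eqEcard low_subD1 /= card_ridgeD1 // -full -tr card_trace.
have star_sub t1 t2 :
    t1 \in star_with (trace t) -> t2 \in star_with (trace t) -> t1 \subset t2.
  move=> t1s t2s; have [t1F vt1 tr1] := star_withP _ _ t1s.
  have [t2F vt2 tr2] := star_withP _ _ t2s.
  apply/subsetP => w wt1; case: (eqVneq w v) => [->//|wv].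
  have : color b w \in trace t2.
    by rewrite tr2 -tr1; apply: imset_f; rewrite low_full // !inE wv.
  case/imsetP => w2; rewrite low_full // !inE => /andP[w2v w2t2] /(congr1 fst) aw.
  by rewrite (a_inj_link t1F t2F vt1 vt2 wt1 w2t2 wv w2v aw).
apply/card_le1P => t1 t1s t2; apply/idP/eqP => [t2s|->//].
apply/eqP; rewrite eq_sym eqEcard star_sub //=.
by move: t1s t2s => /star_withP[t1F _ _] /star_withP[t2F _ _]; rewrite !card_ridge.
Qed.

Lemma sum_load_at (Q : {set 'I_(K ^ 2) * 'I_L}) : (forall p, p \in Q -> p.1 < a v) ->
  \sum_x load_at Q x <= load b k (a v) Q.
Proof.
move=> Q_lt; apply: leq_sum_card_disjoint => [x|x y t].
  apply/subsetP => t; rewrite !inE => /andP[-> /andP[low_done /eqP colQ]].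
  rewrite (subset_trans (low_subS _ _) low_done) color_low_pred colQ /=.
  apply/eqP/setP => p; rewrite !inE; apply/andP/idP => [[/predU1P[->|//]]|pQ].
    by rewrite ltnn.
  by rewrite pQ orbT Q_lt.
rewrite !inE => /andP[_ /andP[_ /eqP tx]] /andP[_ /andP[_ /eqP ty]].
have : (a v, x) \in (a v, y) |: Q by rewrite -ty tx setU11.
by rewrite in_setU1 => /predU1P[[]|/Q_lt]; rewrite ?ltnn.
Qed.

Definition overloaded t :=
  [set x | P ^ (d - #|trace t|.+1) < load_at (trace t) x + #|star_with (trace t)|].

Lemma overloaded_load t : t \in F -> v \in t ->
  {in overloaded t, forall x, P ^ (d - #|trace t|.+1) <= 2 * load_at (trace t) x}.
Proof.
move=> tF vt x; rewrite inE; have := card_trace_le tF vt.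
set j := #|trace t|; set B := P ^ (d - j.+1); set f := load_at _ x => j_le over.
have [jd|dj] := ltnP j.+1 d.
  have P_le_B : P <= B by rewrite -{1}(expn1 P) leq_pexp2l ?P_gt0 ?subn_gt0.
  have K_le_P : 2 * K <= P by rewrite leq_pmulr.
  by have := card_star_with (trace t); lia.
have B1 : B = 1 by rewrite /B (_ : d - j.+1 = 0) //; lia.
have j_full : j = d.-1 by lia.
by have := card_star_with_full tF vt j_full; lia.
Qed.

Lemma card_overloaded t : t \in F -> v \in t -> #|overloaded t| <= 2 * P.
Proof.
move=> tF vt; have := card_trace_le tF vt; set j := #|trace t| => j_le.
have B_gt0 : 0 < P ^ (d - j.+1) by rewrite expn_gt0 P_gt0.
have sum_le : \sum_x load_at (trace t) x <= P * P ^ (d - j.+1).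
  rewrite -expnS (leq_trans (sum_load_at (@trace_lt t))) // (leq_trans (b_bal _ _)) //.
  by rewrite (_ : (d - j.+1).+1 = d - j) //; lia.
rewrite -(leq_pmul2r B_gt0) (leq_trans (leq_card_mul_sum (overloaded_load tF vt))) //.
by rewrite -big_distrr /= -[leqRHS]mulnA leq_mul2l sum_le orbT.
Qed.

Lemma exists_free_color : exists x, forall t, t \in F -> v \in t -> x \notin overloaded t.
Proof.
pose star := [set t in F | v \in t].
have [x xP] : exists x, x \notin \bigcup_(t in star) overloaded t.
  apply: exists_notin; rewrite card_ord (leq_ltn_trans (leq_card_bigcup _ _)) //.
  rewrite (@leq_ltn_trans (#|star| * (2 * P))) //.
    by rewrite -sum_nat_const leq_sum // => t; rewrite inE => /andP[]; apply: card_overloaded.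
  have := ridge_degree v; rewrite -/star; have := P_gt0; move: (P) => p; nia.
exists x => t tF vt; apply: contra xP => xt.
by apply/bigcupP; exists t; rewrite // inE tF.
Qed.

Lemma load_extend_low x beta Q : beta <= a v -> load (extend x) k.+1 beta Q = load b k beta Q.
Proof.
move=> beta_le; apply: eq_card => t; rewrite !inE color_extend_notin ?v_notin_low //.
have low_done : low t beta \subset processed k.
  apply/subsetP => w; rewrite inE => /andP[_ aw]; apply: processed_of_lt.
  exact: leq_trans aw beta_le.
by rewrite low_done (subset_trans low_done processed_subS).
Qed.

Lemma load_extend_high x beta Q : a v < beta ->
  load (extend x) k.+1 beta Q <= load b k (a v).+1 Q +
    #|[set t in F | (v \in t) && (color (extend x) @: low t (a v).+1 == Q)]|.
Proof.
move=> lt_beta; rewrite /load (leq_trans _ (leq_card_setU _ _)) //.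
apply/subset_leq_card/subsetP => t /setIdP[tF /andP[low_done /eqP colQ]].
have low_eq : low t beta = low t (a v).+1.
  apply/setP => w; rewrite !inE; case wt: (w \in t) => //=.
  apply/idP/idP => [aw|]; last by move/leq_trans; apply.
  by rewrite ltnS processed_succ_le // (subsetP low_done) // inE wt.
rewrite low_eq in low_done colQ; apply/setUP.
have [vt|vt] := boolP (v \in t).
  by right; apply/setIdP; rewrite vt colQ eqxx.
left; apply/setIdP; split => //.
have v_low : v \notin low t (a v).+1 by rewrite inE (negbTE vt).
rewrite -colQ color_extend_notin // eqxx andbT.
apply/subsetP => w wlow; have := subsetP low_done w wlow.
rewrite processed_succ in_setU1 => /predU1P[wv|//].
by move: wlow; rewrite wv (negbTE v_low).
Qed.

Lemma balanced_extend x : (forall t, t \in F -> v \in t -> x \notin overloaded t) ->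
  balanced (extend x) k.+1.
Proof.
move=> x_free beta Q; have [beta_le|lt_beta] := leqP beta (a v).
  by rewrite load_extend_low.
rewrite (leq_trans (load_extend_high x Q lt_beta)) //.
set J := [set t in F | _].
have [->|[t0 t0J]] := set_0Vmem J; first by rewrite cards0 addn0.
move: t0J; rewrite inE => /andP[t0F /andP[vt0 /eqP]]; rewrite color_extend_succ // => Qt0.
have J_sub : J \subset star_with (trace t0).
  apply/subsetP => t; rewrite inE => /andP[tF /andP[vt /eqP]].
  rewrite color_extend_succ // -Qt0 => trQ; apply/star_withP; split => //.
  by rewrite -(setU1K (notin_trace t x)) trQ setU1K ?notin_trace.
have := x_free t0 t0F vt0; rewrite inE -leqNgt -Qt0 cardsU1 notin_trace.
by apply: leq_trans; rewrite leq_add2l subset_leq_card.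
Qed.

End Step.

Lemma exists_balanced k : exists b, balanced b k.
Proof.
have L_gt0 : 0 < L by rewrite !muln_gt0 K_gt0 m_gt0.
elim: k => [|k [b b_bal]]; first by exists (fun=> Ordinal L_gt0); apply: balanced0.
have [v /eqP rank_v|no_v] := pickP (fun v => rank v == k).
  have [x x_free] := exists_free_color b_bal rank_v.
  by exists (extend b v x); apply: balanced_extend.
exists b => beta Q; rewrite /load (_ : processed k.+1 = processed k) ?b_bal //.
by apply/setP => w; rewrite !inE ltnS leq_eqVlt no_v.
Qed.

Lemma balanced_ridges_inj b :
  balanced b (K ^ 2 * #|T|) -> {in F &, injective (fun t : {set T} => color b @: t)}.
Proof.
move=> b_bal s t sF tF /= st_col; apply/eqP/negPn/negP => st.
have low_all u : low u (K ^ 2) = u by apply/setP => w; rewrite inE ltn_ord andbT.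
have all_done (u : {set T}) : u \subset processed (K ^ 2 * #|T|).
  by apply/subsetP => w _; rewrite inE rank_lt_max.
have := b_bal (K ^ 2) (color b @: s); rewrite leqNgt => /negP; apply.
rewrite card_in_imset; last exact: color_inj_ridge.
rewrite card_ridge // subnn expn0; apply: (@leq_trans #|[set s; t]|).
  by rewrite cards2 st.
apply: subset_leq_card; apply/subsetP => u /set2P[]->.
  by rewrite inE low_all all_done sF eqxx.
by rewrite inE low_all all_done tF st_col eqxx.
Qed.

End Distance2Coloring.

Lemma ridge_coloring : exists c : T -> 'I_(K ^ 2) * 'I_L,
  proper_coloring X c /\
  (forall s t, s \in F -> t \in F -> s != t -> ~~ same_pattern c s t).
Proof.
have deg2 v : #|[set w | adjacent2 X v w]| < K ^ 2.
  by have := card_adjacent2 vertex_degree v; rewrite subn1 prednK.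
have K2_gt0 : 0 < K ^ 2 by rewrite expn_gt0 K_gt0.
have [a a_adj2] := greedy_coloring K2_gt0 (@adjacent2_sym _ X) (@adjacent2_irr _ X) deg2.
have [b b_bal] := exists_balanced a_adj2 (K ^ 2 * #|T|).
exists (color a b); split.
  move=> x y xy xyX [axy _].
  have xy2 : adjacent2 X x y by rewrite /adjacent2 /adjacent xy xyX.
  by move: (a_adj2 _ _ xy2); rewrite axy eqxx.
move=> s t sF tF st; apply: contra st => /same_pattern_imset st_col.
by apply/eqP; apply: (balanced_ridges_inj a_adj2 b_bal sF tF st_col).
Qed.

End RidgeColoring.

Theorem lemma3 (T : finType) (X : {set {set T}}) (d K : nat) :
  2 <= d -> 5 <= K ->
  simplicial_complex X -> vertex_set_is_all X -> complex_dim X d ->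
  Delta X <= K - 1 ->
  exists c : T -> 'I_(18 * K ^ 8 * d ^ 6 * ceil_root d #|T|),
    proper_coloring X c /\
    (forall s t, s \in skel X d.-1 -> t \in skel X d.-1 -> s != t ->
       ~~ same_pattern c s t).
Proof.
move=> d_ge2 K_ge5 X_complex X_spans [[s _ card_s] _] Delta_le.
have d_gt0 : 0 < d by apply: leq_trans d_ge2.
have K_gt0 : 0 < K by apply: leq_trans K_ge5.
have T_gt0 : 0 < #|T| by rewrite (leq_trans _ (max_card s)) // card_s.
have [c [c_proper c_ridges]] := ridge_coloring d_gt0 K_gt0 (ceil_root_gt0 d_gt0 T_gt0)
  X_complex (leq_ceil_root _ d_gt0)
  (fun v => leq_trans (card_skel_through_le_Delta X_spans v _) Delta_le)
  (fun v => leq_trans (card_adjacent_le_Delta X_spans v) Delta_le).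
pose f p := widen_ord (card_colors_le (ceil_root d #|T|) d_gt0 K_gt0) (enum_rank p).
have f_inj : injective f by move=> p q /(congr1 val) /= /val_inj /enum_rank_inj.
exists (f \o c); split; first exact: proper_coloring_comp.
by move=> u t uF tF ut; rewrite same_pattern_comp // c_ridges.
Qed.
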